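(* For every integer $n\ge 0$ and $x>0$, $$\big[\ln\partial_x,\ \partial_x\big]\, x^n = \frac{1}{x}\,\delta_{n0},$$ where $[A,B]=AB-BA$, $\partial_x$ is the ordinary derivative, $\delta_{n0}$ is the Kronecker delta, and $\ln\partial_x$ is defined in the context below (with $(\ln\partial_x)\,0 = 0$).
   Context: For real $\nu$, $x>0$ and $\mu\ge 0$, the fractional derivative of a power is defined by $\partial_x^\nu x^\mu = \frac{\Gamma(\mu+1)}{\Gamma(\mu-\nu+1)}\,x^{\mu-\nu}$. The logarithm of the derivative operator is defined on powers by $(\ln\partial_x)\,x^\mu := \lim_{\nu\to 0}\frac{\partial_x^\nu x^\mu - x^\mu}{\nu}$ and extended linearly; the operator $\partial_x\circ\ln\partial_x$ applies the ordinary derivative to the resulting function (which may contain $\ln x$). *)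

From Stdlib Require Import Reals Lra List.
From Coquelicot Require Import Coquelicot.
Open Scope R_scope.

Definition Gamma (s : R) : R :=
  RInt_gen (fun t => Rpower t (s - 1) * exp (- t)) (at_right 0) (Rbar_locally p_infty).

Definition frac_deriv_pow (nu mu x : R) : R :=
  Gamma (mu + 1) / Gamma (mu - nu + 1) * Rpower x (mu - nu).

Definition lnD_pow (mu x : R) : R :=
  real (Lim (fun nu => (frac_deriv_pow nu mu x - Rpower x mu) / nu) 0).

(* Finite linear combinations of powers: [(c_1,mu_1); ...] means sum c_i x^mu_i. *)
Definition powcomb := list (R * R).

Definition eval_pc (p : powcomb) (x : R) : R :=
  fold_right (fun cm acc => fst cm * Rpower x (snd cm) + acc) 0 p.

Definition lnD (p : powcomb) (x : R) : R :=
  fold_right (fun cm acc => fst cm * lnD_pow (snd cm) x + acc) 0 p.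

Definition d_pc (p : powcomb) : powcomb :=
  flat_map (fun cm => if Req_EM_T (snd cm) 0 then nil
                      else ((fst cm * snd cm, snd cm - 1) :: nil)) p.

Definition monomial (n : nat) : powcomb := (1, INR n) :: nil.

From Stdlib Require Import Reals Lra Classical.
From Coquelicot Require Import Coquelicot.
Open Scope R_scope.

(* On powers, [(ln d) x^m] is the nu-derivative at [0] of
   [Gamma(m+1)/Gamma(m-nu+1) x^(m-nu)], namely [x^m (psi(m+1) - ln x)].
   The recurrence [Gamma(s+1) = s Gamma(s)] gives [psi(m+1) = psi(1) + H_m]
   with [H_m] the harmonic numbers, hence
     [(ln d)(d x^m) - d((ln d) x^m) = m x^(m-1) (H_(m-1) - H_m) + x^(m-1) = 0]
   for [m >= 1], while for [m = 0] only [-d(psi(1) - ln x) = 1/x] survives. *)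

Lemma exp_le_compat x y : x <= y -> exp x <= exp y.
Proof. intros [h | ->]; [left; now apply exp_increasing | lra]. Qed.

Lemma filter_prod_at_right_0_pinfty (a0 b0 : R) (P : R * R -> Prop) :
  0 < a0 -> (forall a b, 0 < a < a0 -> b0 < b -> P (a, b)) ->
  filter_prod (at_right 0) (Rbar_locally p_infty) P.
Proof.
  intros ha0 HP.
  apply (Filter_prod _ _ _ (fun a => 0 < a < a0) (fun b => b0 < b));
    [| now exists b0 | exact HP].
  exists (mkposreal a0 ha0); intros a ha ha_pos.
  change (Rabs (a - 0) < a0) in ha.
  rewrite Rminus_0_r, Rabs_pos_eq in ha; lra.
Qed.

Lemma is_RInt_gen_ge0 (f : R -> R) (l : R) :
  (forall t, 0 < t -> 0 <= f t) ->
  is_RInt_gen f (at_right 0) (Rbar_locally p_infty) l -> 0 <= l.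
Proof.
  intros f_nonneg hl.
  enough (Rabs l <= l) by (pose proof (Rabs_pos l); lra).
  apply (RInt_gen_norm (V := R_CompleteNormedModule)
           (Fa := at_right 0) (Fb := Rbar_locally p_infty) f f l l); auto.
  - apply (filter_prod_at_right_0_pinfty 1 1); intros; simpl; lra.
  - apply (filter_prod_at_right_0_pinfty 1 1); [lra |].
    intros a b ha hb t ht; simpl in *.
    change (Rabs (f t) <= f t); rewrite Rabs_pos_eq; [lra | apply f_nonneg; lra].
Qed.

Section NonnegImproperIntegral.

Variable f : R -> R.
Hypothesis f_nonneg : forall t, 0 < t -> 0 <= f t.
Hypothesis f_integrable : forall a b, 0 < a -> 0 < b -> ex_RInt f a b.

Lemma RInt_nonneg_mono a b a' b' : 0 < a' -> a' <= a -> a <= b -> b <= b' ->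
  RInt f a b <= RInt f a' b'.
Proof.
  intros ha' ha'a hab hbb'.
  rewrite <- (RInt_Chasles f a' a b'), <- (RInt_Chasles f a b b')
    by (apply f_integrable; lra).
  assert (0 <= RInt f a' a)
    by (apply RInt_ge_0; [lra | apply f_integrable; lra | intros; apply f_nonneg; lra]).
  assert (0 <= RInt f b b')
    by (apply RInt_ge_0; [lra | apply f_integrable; lra | intros; apply f_nonneg; lra]).
  change plus with Rplus; lra.
Qed.

Lemma is_RInt_gen_of_bounded_nonneg (M : R) :
  (forall a b, 0 < a -> a <= b -> RInt f a b <= M) ->
  exists l, is_RInt_gen f (at_right 0) (Rbar_locally p_infty) l
            /\ forall a b, 0 < a -> a <= b -> RInt f a b <= l.
Proof.
  intros HM.
  set (E := fun y => exists a b, 0 < a /\ a <= b /\ y = RInt f a b).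
  destruct (completeness E) as [l [l_ub l_lub]].
  { exists M; intros y (a & b & ha & hab & ->); auto. }
  { exists (RInt f 1 1), 1, 1; repeat split; lra. }
  assert (RInt_le_l : forall a b, 0 < a -> a <= b -> RInt f a b <= l)
    by (intros a b ha hab; apply l_ub; now exists a, b).
  exists l; split; [| exact RInt_le_l].
  intros P [eps HP].
  assert (l_approx : exists a0 b0, 0 < a0 /\ a0 <= b0 /\ l - eps < RInt f a0 b0).
  { apply NNPP; intro Hn.
    enough (l <= l - eps) by (destruct eps; simpl in *; lra).
    apply l_lub; intros y (a & b & ha & hab & ->).
    apply Rnot_lt_le; intro hlt; apply Hn; now exists a, b. }
  destruct l_approx as (a0 & b0 & ha0 & hab0 & hlt).
  apply (filter_prod_at_right_0_pinfty a0 b0); [exact ha0 |].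
  intros a b ha hb; exists (RInt f a b); split.
  - apply (RInt_correct (V := R_CompleteNormedModule)), f_integrable; simpl; lra.
  - apply HP; change (Rabs (RInt f a b - l) < eps).
    pose proof (RInt_le_l a b ltac:(lra) ltac:(lra)).
    pose proof (RInt_nonneg_mono a0 b0 a b ltac:(lra) ltac:(lra) ltac:(lra) ltac:(lra)).
    rewrite Rabs_left1; lra.
Qed.

End NonnegImproperIntegral.

Definition gamma_integrand (s t : R) : R := Rpower t (s - 1) * exp (- t).

Lemma gamma_integrand_pos s t : 0 < t -> 0 < gamma_integrand s t.
Proof. intros; apply Rmult_lt_0_compat; apply exp_pos. Qed.

Lemma continuous_gamma_integrand s t : 0 < t -> continuous (gamma_integrand s) t.
Proof.
  intros ht; apply (ex_derive_continuous (V := R_NormedModule)).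
  unfold gamma_integrand, Rpower; auto_derive; lra.
Qed.

Lemma ex_RInt_gamma_integrand s a b : 0 < a -> 0 < b -> ex_RInt (gamma_integrand s) a b.
Proof.
  intros ha hb; apply (ex_RInt_continuous (V := R_CompleteNormedModule)).
  intros t [ht _]; apply continuous_gamma_integrand.
  enough (0 < Rmin a b) by lra. now apply Rmin_glb_lt.
Qed.

Lemma Rpower_mul_exp_bounded p : exists C, forall t, 1 <= t -> Rpower t p * exp (- t) <= C.
Proof.
  destruct (Rle_dec p 0) as [hp | hp].
  - exists 1; intros t ht; unfold Rpower; rewrite <- exp_plus, <- exp_0.
    apply exp_le_compat.
    assert (0 <= ln t) by (rewrite <- ln_1; apply ln_le; lra).
    nra.
  - (* [ln y <= y - 1] at [y = t / p]: the maximum of [p ln t - t] is at [t = p]. *)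
    exists (exp (p * ln p - p)); intros t ht; unfold Rpower; rewrite <- exp_plus.
    apply exp_le_compat.
    assert (ln_le : ln (t / p) <= t / p - 1).
    { pose proof (exp_ineq1_le (ln (t / p))).
      rewrite exp_ln in * by (apply Rdiv_lt_0_compat; lra); lra. }
    rewrite ln_div in ln_le by lra.
    assert (p * (ln t - ln p) <= p * (t / p - 1)) by (apply Rmult_le_compat_l; lra).
    assert (p * (t / p) = t) by (field; lra).
    nra.
Qed.

Lemma RInt_Rpower_le s a : 0 < s -> 0 < a <= 1 ->
  RInt (fun t => Rpower t (s - 1)) a 1 <= / s.
Proof.
  intros hs ha.
  assert (antiderivative : is_RInt (fun t => Rpower t (s - 1)) a 1
                             (Rpower 1 s / s - Rpower a s / s)).
  { apply (is_RInt_derive (fun t => Rpower t s / s)).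
    - intros t [ht _]; rewrite Rmin_left in ht by lra.
      unfold Rpower; auto_derive; [lra |].
      replace ((s - 1) * ln t) with (s * ln t + - ln t) by ring.
      rewrite exp_plus, exp_Ropp, exp_ln by lra; field; lra.
    - intros t [ht _]; rewrite Rmin_left in ht by lra.
      apply (ex_derive_continuous (V := R_NormedModule)).
      unfold Rpower; auto_derive; lra. }
  rewrite (is_RInt_unique _ _ _ _ antiderivative).
  replace (Rpower 1 s) with 1 by (unfold Rpower; now rewrite ln_1, Rmult_0_r, exp_0).
  assert (0 < Rpower a s / s) by (apply Rdiv_lt_0_compat; [apply exp_pos | lra]).
  unfold Rdiv in *; lra.
Qed.

Lemma RInt_div_sqr_le C b : 0 <= C -> 1 <= b -> RInt (fun t => C / t ^ 2) 1 b <= C.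
Proof.
  intros hC hb.
  assert (antiderivative : is_RInt (fun t => C / t ^ 2) 1 b (- C / b - - C / 1)).
  { apply (is_RInt_derive (fun t => - C / t)).
    - intros t [ht _]; rewrite Rmin_left in ht by lra.
      auto_derive; [lra | field; lra].
    - intros t [ht _]; rewrite Rmin_left in ht by lra.
      apply (ex_derive_continuous (V := R_NormedModule)); auto_derive; nra. }
  rewrite (is_RInt_unique _ _ _ _ antiderivative).
  assert (0 <= C / b) by (apply Rdiv_le_0_compat; lra).
  unfold Rdiv in *; rewrite Rinv_1; lra.
Qed.

Lemma RInt_gamma_integrand_le_inv s a : 0 < s -> 0 < a <= 1 ->
  RInt (gamma_integrand s) a 1 <= / s.
Proof.
  intros hs ha.
  apply Rle_trans with (RInt (fun t => Rpower t (s - 1)) a 1); [| now apply RInt_Rpower_le].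
  apply RInt_le; [lra | apply ex_RInt_gamma_integrand; lra | |].
  - apply (ex_RInt_continuous (V := R_CompleteNormedModule)).
    intros t [ht _]; rewrite Rmin_left in ht by lra.
    apply (ex_derive_continuous (V := R_NormedModule)).
    unfold Rpower; auto_derive; lra.
  - intros t ht; unfold gamma_integrand.
    assert (exp (- t) <= 1) by (rewrite <- exp_0; apply exp_le_compat; lra).
    assert (0 < Rpower t (s - 1)) by apply exp_pos.
    nra.
Qed.

Lemma RInt_gamma_integrand_tail_bounded s :
  exists C, 0 <= C /\ forall b, 1 <= b -> RInt (gamma_integrand s) 1 b <= C.
Proof.
  destruct (Rpower_mul_exp_bounded (s + 1)) as [C HC].
  assert (hC : 0 <= C).
  { apply Rle_trans with (Rpower 1 (s + 1) * exp (- 1)); [| apply HC; lra].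
    left; apply Rmult_lt_0_compat; apply exp_pos. }
  exists C; split; [exact hC |]; intros b hb.
  apply Rle_trans with (RInt (fun t => C / t ^ 2) 1 b); [| now apply RInt_div_sqr_le].
  apply RInt_le; [lra | apply ex_RInt_gamma_integrand; lra | |].
  - apply (ex_RInt_continuous (V := R_CompleteNormedModule)).
    intros t [ht _]; rewrite Rmin_left in ht by lra.
    apply (ex_derive_continuous (V := R_NormedModule)); auto_derive; nra.
  - intros t ht; unfold gamma_integrand.
    specialize (HC t ltac:(lra)).
    replace (s + 1) with (s - 1 + INR 2) in HC by (simpl; ring).
    rewrite Rpower_plus, Rpower_pow in HC by lra.
    apply Rle_trans with (Rpower t (s - 1) * t ^ 2 * exp (- t) / t ^ 2).
    + right; field; lra.
    + apply Rmult_le_compat_r; [apply Rlt_le, Rinv_0_lt_compat; nra | lra].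
Qed.

Lemma RInt_gamma_integrand_bounded s : 0 < s ->
  exists M, forall a b, 0 < a -> a <= b -> RInt (gamma_integrand s) a b <= M.
Proof.
  intros hs.
  destruct (RInt_gamma_integrand_tail_bounded s) as (C & hC & tail_bound).
  exists (/ s + C); intros a b ha hab.
  pose proof (Rmin_l a 1); pose proof (Rmax_l b 1).
  assert (ha' : 0 < Rmin a 1 <= 1) by (split; [apply Rmin_glb_lt; lra | apply Rmin_r]).
  assert (hb' : 1 <= Rmax b 1) by apply Rmax_r.
  apply Rle_trans with (RInt (gamma_integrand s) (Rmin a 1) (Rmax b 1)).
  - apply RInt_nonneg_mono;
      [intros; left; now apply gamma_integrand_pos | apply ex_RInt_gamma_integrand
      | lra | lra | lra | lra].
  - rewrite <- (RInt_Chasles _ (Rmin a 1) 1 (Rmax b 1))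
      by (apply ex_RInt_gamma_integrand; lra).
    pose proof (RInt_gamma_integrand_le_inv s (Rmin a 1) hs ha').
    pose proof (tail_bound (Rmax b 1) hb').
    change plus with Rplus; lra.
Qed.

Lemma Gamma_spec s : 0 < s ->
  is_RInt_gen (gamma_integrand s) (at_right 0) (Rbar_locally p_infty) (Gamma s)
  /\ forall a b, 0 < a -> a <= b -> RInt (gamma_integrand s) a b <= Gamma s.
Proof.
  intros hs.
  destruct (RInt_gamma_integrand_bounded s hs) as [M HM].
  destruct (is_RInt_gen_of_bounded_nonneg (gamma_integrand s)
              (fun t ht => Rlt_le _ _ (gamma_integrand_pos s t ht))
              (ex_RInt_gamma_integrand s) M HM) as [l [hl l_ub]].
  replace (Gamma s) with l; [now split |].
  symmetry; exact (is_RInt_gen_unique (V := R_CompleteNormedModule) _ _ hl).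
Qed.

Lemma Gamma_pos s : 0 < s -> 0 < Gamma s.
Proof.
  intros hs.
  apply Rlt_le_trans with (RInt (gamma_integrand s) 1 2); [| apply Gamma_spec; lra].
  apply RInt_gt_0; [lra | intros; apply gamma_integrand_pos; lra |].
  intros; apply continuous_gamma_integrand; lra.
Qed.

Lemma Rpower_mul_exp_cvg_0 s : 0 < s ->
  filterlim (fun t => Rpower t s * exp (- t)) (at_right 0) (locally 0).
Proof.
  intros hs; apply filterlim_locally; intros eps.
  set (d := Rpower eps (/ s)).
  assert (hd : 0 < d) by apply exp_pos.
  exists (mkposreal d hd); intros t ht ht_pos.
  change (Rabs (t - 0) < d) in ht; rewrite Rminus_0_r, Rabs_pos_eq in ht by lra.
  change (Rabs (Rpower t s * exp (- t) - 0) < eps).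
  assert (Rpower t s < eps).
  { replace (pos eps) with (Rpower d s)
      by (unfold d; rewrite Rpower_mult, Rinv_l, Rpower_1; [easy | apply cond_pos | lra]).
    apply Rlt_Rpower_l; lra. }
  assert (exp (- t) <= 1) by (rewrite <- exp_0; apply exp_le_compat; lra).
  assert (0 < Rpower t s) by apply exp_pos.
  pose proof (exp_pos (- t)).
  rewrite Rminus_0_r, Rabs_pos_eq by nra; nra.
Qed.

Lemma Rpower_mul_exp_cvg_pinfty s :
  filterlim (fun t => Rpower t s * exp (- t)) (Rbar_locally p_infty) (locally 0).
Proof.
  apply filterlim_locally; intros eps.
  destruct (Rpower_mul_exp_bounded (s + 1)) as [C HC].
  exists (Rmax 1 (C / eps)); intros t ht.
  pose proof (Rmax_l 1 (C / eps)); pose proof (Rmax_r 1 (C / eps)).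
  change (Rabs (Rpower t s * exp (- t) - 0) < eps).
  specialize (HC t ltac:(lra)); rewrite Rpower_plus, Rpower_1 in HC by lra.
  assert (0 < Rpower t s) by apply exp_pos.
  pose proof (exp_pos (- t)); pose proof (cond_pos eps).
  assert (C < eps * t).
  { replace C with (eps * (C / eps)) at 1 by (field; lra).
    apply Rmult_lt_compat_l; lra. }
  rewrite Rminus_0_r, Rabs_pos_eq by nra; nra.
Qed.

(* Integration by parts: [t^s e^(-t)] has derivative
   [s t^(s-1) e^(-t) - t^s e^(-t)] and vanishes at both ends of (0, +oo). *)
Lemma Gamma_succ s : 0 < s -> Gamma (s + 1) = s * Gamma s.
Proof.
  intros hs.
  set (F := fun t => - (Rpower t s * exp (- t))).
  set (F' := fun t => gamma_integrand (s + 1) t - s * gamma_integrand s t).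
  assert (F_deriv : forall t, 0 < t -> is_derive F t (F' t)).
  { intros t ht; unfold F, F', gamma_integrand, Rpower; auto_derive; [lra |].
    replace (s + 1 - 1) with s by ring.
    replace ((s - 1) * ln t) with (s * ln t + - ln t) by ring.
    rewrite exp_plus, (exp_Ropp (ln t)), exp_ln by lra; field; lra. }
  assert (F'_integral : is_RInt_gen F' (at_right 0) (Rbar_locally p_infty) 0).
  { apply (is_RInt_gen_ext (Derive F)).
    - apply (filter_prod_at_right_0_pinfty 1 0); [lra |]; intros a b ha hb t ht; simpl in ht.
      apply is_derive_unique, F_deriv.
      enough (0 < Rmin a b) by lra. apply Rmin_glb_lt; lra.
    - rewrite <- (Rminus_0_r 0) at 2.
      apply is_RInt_gen_Derive.
      + apply (filter_prod_at_right_0_pinfty 1 0); [lra |]; intros a b ha hb t ht; simpl in ht.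
        exists (F' t); apply F_deriv.
        enough (0 < Rmin a b) by lra. apply Rmin_glb_lt; lra.
      + apply (filter_prod_at_right_0_pinfty 1 0); [lra |]; intros a b ha hb t ht; simpl in ht.
        assert (ht_pos : 0 < t) by (enough (0 < Rmin a b) by lra; apply Rmin_glb_lt; lra).
        apply (continuous_ext_loc (T := R_UniformSpace) _ F').
        * exists (mkposreal t ht_pos); intros y hy.
          change (Rabs (y - t) < t) in hy; apply Rabs_def2 in hy.
          symmetry; apply is_derive_unique, F_deriv; lra.
        * apply (ex_derive_continuous (V := R_NormedModule)).
          unfold F', gamma_integrand, Rpower; auto_derive; lra.
      + rewrite <- Ropp_0 at 2; apply filterlim_comp with (1 := Rpower_mul_exp_cvg_0 s hs).
        apply (filterlim_opp 0).
      + rewrite <- Ropp_0; apply filterlim_comp with (1 := Rpower_mul_exp_cvg_pinfty s).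
        apply (filterlim_opp 0). }
  assert (combination : is_RInt_gen F' (at_right 0) (Rbar_locally p_infty)
                          (Gamma (s + 1) - s * Gamma s)).
  { exact (is_RInt_gen_minus (Fa := at_right 0) (Fb := Rbar_locally p_infty) _ _ _ _
             (proj1 (Gamma_spec (s + 1) ltac:(lra)))
             (is_RInt_gen_scal _ s _ (proj1 (Gamma_spec s hs)))). }
  apply (is_RInt_gen_unique (V := R_CompleteNormedModule)) in F'_integral, combination.
  rewrite F'_integral in combination; lra.
Qed.

Definition convex_on_pos (f : R -> R) : Prop :=
  forall a b lam, 0 < a -> 0 < b -> 0 <= lam <= 1 ->
  f (lam * a + (1 - lam) * b) <= lam * f a + (1 - lam) * f b.

(* Both [exp u] and [exp v] lie above the tangent line of [exp] at the convex
   combination [w]. *)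
Lemma exp_convex u v lam : 0 <= lam <= 1 ->
  exp (lam * u + (1 - lam) * v) <= lam * exp u + (1 - lam) * exp v.
Proof.
  intros hlam; set (w := lam * u + (1 - lam) * v).
  assert (tangent : forall z, exp w * (1 + (z - w)) <= exp z).
  { intros z; replace (exp z) with (exp w * exp (z - w)) by (rewrite <- exp_plus; f_equal; ring).
    apply Rmult_le_compat_l; [left; apply exp_pos | apply exp_ineq1_le]. }
  pose proof (tangent u); pose proof (tangent v).
  assert (lam * (exp w * (1 + (u - w))) + (1 - lam) * (exp w * (1 + (v - w))) = exp w)
    by (unfold w; ring).
  nra.
Qed.

Lemma Gamma_convex : convex_on_pos Gamma.
Proof.
  intros a b lam ha hb hlam; set (c := lam * a + (1 - lam) * b).
  assert (hc : 0 < c) by (unfold c; nra).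
  assert (difference := is_RInt_gen_minus (Fa := at_right 0) (Fb := Rbar_locally p_infty)
    _ _ _ _ (is_RInt_gen_plus _ _ _ _
               (is_RInt_gen_scal _ lam _ (proj1 (Gamma_spec a ha)))
               (is_RInt_gen_scal _ (1 - lam) _ (proj1 (Gamma_spec b hb))))
    (proj1 (Gamma_spec c hc))).
  apply is_RInt_gen_ge0 in difference.
  - change (0 <= lam * Gamma a + (1 - lam) * Gamma b - Gamma c) in difference; lra.
  - intros t ht; change (0 <= lam * gamma_integrand a t + (1 - lam) * gamma_integrand b t
                               - gamma_integrand c t).
    unfold gamma_integrand, Rpower.
    replace ((c - 1) * ln t) with (lam * ((a - 1) * ln t) + (1 - lam) * ((b - 1) * ln t))
      by (unfold c; ring).
    pose proof (exp_convex ((a - 1) * ln t) ((b - 1) * ln t) lam hlam).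
    pose proof (exp_pos (- t)).
    nra.
Qed.

Section ConvexLeftSlope.

Variable f : R -> R.
Hypothesis f_convex : convex_on_pos f.
Variable x : R.
Hypothesis x_pos : 0 < x.

Lemma convex_left_slope_mono h1 h2 : 0 < h1 <= h2 -> h2 < x ->
  (f (x - h1) - f x) / h1 <= (f (x - h2) - f x) / h2.
Proof.
  intros hh hx.
  assert (hlam : 0 <= h1 / h2 <= 1).
  { split; [apply Rdiv_le_0_compat; lra |].
    apply (Rmult_le_reg_r h2); [lra |].
    unfold Rdiv; rewrite Rmult_assoc, Rinv_l; lra. }
  assert (convexity := f_convex (x - h2) x (h1 / h2) ltac:(lra) x_pos hlam).
  replace (h1 / h2 * (x - h2) + (1 - h1 / h2) * x) with (x - h1) in convexity
    by (field; lra).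
  apply (Rmult_le_reg_l h1); [lra |].
  replace (h1 * ((f (x - h1) - f x) / h1)) with (f (x - h1) - f x) by (field; lra).
  replace (h1 * ((f (x - h2) - f x) / h2))
    with (h1 / h2 * f (x - h2) + (1 - h1 / h2) * f x - f x) by (field; lra).
  lra.
Qed.

Lemma convex_left_slope_lower_bound h : 0 < h < x ->
  f x - f (x + 1) <= (f (x - h) - f x) / h.
Proof.
  intros hh; set (lam := / (1 + h)).
  assert (hlam : 0 <= lam <= 1).
  { unfold lam; split; [left; apply Rinv_0_lt_compat; lra |].
    rewrite <- Rinv_1; apply Rinv_le_contravar; lra. }
  assert (convexity := f_convex (x - h) (x + 1) lam ltac:(lra) ltac:(lra) hlam).
  replace (lam * (x - h) + (1 - lam) * (x + 1)) with x in convexity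
    by (unfold lam; field; lra).
  assert ((1 + h) * f x <= f (x - h) + h * f (x + 1)).
  { replace (f (x - h) + h * f (x + 1))
      with ((1 + h) * (lam * f (x - h) + (1 - lam) * f (x + 1))) by (unfold lam; field; lra).
    apply Rmult_le_compat_l; lra. }
  apply (Rmult_le_reg_l h); [lra |].
  replace (h * ((f (x - h) - f x) / h)) with (f (x - h) - f x) by (field; lra).
  lra.
Qed.

Lemma convex_left_slope_cvg (u : nat -> R) :
  (forall k, 0 < u k < x) -> (forall k, u (S k) <= u k) ->
  exists D : R, is_lim_seq (fun k => (f (x - u k) - f x) / u k) D.
Proof.
  intros u_bounds u_decr.
  destruct (ex_finite_lim_seq_decr (fun k => (f (x - u k) - f x) / u k) (f x - f (x + 1)))
    as [D HD]; [| | now exists D].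
  - intros k; pose proof (u_bounds k); pose proof (u_bounds (S k)); pose proof (u_decr k).
    apply convex_left_slope_mono; lra.
  - intros k; apply convex_left_slope_lower_bound, u_bounds.
Qed.

End ConvexLeftSlope.

Lemma exp_slope_cvg (c : R) (u : nat -> R) :
  (forall k, u k <> 0) -> is_lim_seq u 0 ->
  is_lim_seq (fun k => (exp (c * u k) - 1) / u k) c.
Proof.
  intros u_neq0 u_cvg.
  assert (deriv : derivable_pt_lim (fun h => exp (c * h)) 0 c).
  { apply is_derive_Reals; auto_derive; [easy |].
    rewrite Rmult_0_r, exp_0; ring. }
  apply is_lim_seq_Reals; intros eps heps.
  destruct (deriv eps heps) as [delta Hdelta].
  apply is_lim_seq_Reals in u_cvg.
  destruct (u_cvg delta (cond_pos delta)) as [N HN].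
  exists N; intros k hk; specialize (HN k hk); unfold R_dist in *.
  rewrite Rminus_0_r in HN.
  specialize (Hdelta (u k) (u_neq0 k) HN).
  now rewrite Rplus_0_l, Rmult_0_r, exp_0 in Hdelta.
Qed.

Definition gamma_ratio (m : nat) (v : R) : R := Gamma (INR m + 1) / Gamma (INR m - v + 1).

Lemma gamma_ratio_succ m v : 0 < v < 1 ->
  gamma_ratio (S m) v = (INR m + 1) / (INR m + 1 - v) * gamma_ratio m v.
Proof.
  intros hv; unfold gamma_ratio; rewrite S_INR; pose proof (pos_INR m).
  replace (INR m + 1 - v + 1) with (INR m - v + 1 + 1) by ring.
  rewrite (Gamma_succ (INR m + 1)), (Gamma_succ (INR m - v + 1)) by lra.
  pose proof (Gamma_pos (INR m + 1) ltac:(lra)); pose proof (Gamma_pos (INR m - v + 1) ltac:(lra)).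
  field; lra.
Qed.

Fixpoint harmonic (m : nat) : R :=
  match m with O => 0 | S m' => harmonic m' + / (INR m' + 1) end.

Lemma gamma_ratio_slope_cvg (u : nat -> R) (b : R) (m : nat) :
  (forall k, 0 < u k < 1) -> is_lim_seq u 0 ->
  is_lim_seq (fun k => (gamma_ratio 0 (u k) - 1) / u k) b ->
  is_lim_seq (fun k => (gamma_ratio m (u k) - 1) / u k) (b + harmonic m).
Proof.
  intros u_bounds u_cvg Hb.
  induction m as [| m IH]; simpl harmonic; [now rewrite Rplus_0_r |].
  pose proof (pos_INR m).
  assert (denominator_cvg : is_lim_seq (fun k => INR m + 1 - u k) (INR m + 1 - 0))
    by (apply is_lim_seq_minus'; [apply is_lim_seq_const | exact u_cvg]).
  apply is_lim_seq_ext with (fun k => (INR m + 1) / (INR m + 1 - u k)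
                                      * ((gamma_ratio m (u k) - 1) / u k)
                                      + 1 / (INR m + 1 - u k)).
  - intros k; specialize (u_bounds k); rewrite gamma_ratio_succ by lra; field; lra.
  - replace (b + (harmonic m + / (INR m + 1)))
      with ((INR m + 1) / (INR m + 1 - 0) * (b + harmonic m) + 1 / (INR m + 1 - 0))
      by (field; lra).
    apply is_lim_seq_plus'; [apply is_lim_seq_mult'; [| exact IH] |];
      (apply is_lim_seq_div'; [apply is_lim_seq_const | exact denominator_cvg | lra]).
Qed.

(* [Lim f 0] samples [f] at [0 + / (n + 1)]; dropping [n = 0], where the
   denominator would be [Gamma 0], leaves the points [nu k] in (0, 1). *)
Definition nu (k : nat) : R := / (INR k + 2).

Lemma Rbar_loc_seq_0_succ k : Rbar_loc_seq 0 (S k) = nu k.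
Proof. unfold nu, Rbar_loc_seq; rewrite S_INR, Rplus_0_l; f_equal; ring. Qed.

Lemma nu_bounds k : 0 < nu k < 1.
Proof.
  unfold nu; pose proof (pos_INR k); split; [apply Rinv_0_lt_compat; lra |].
  rewrite <- Rinv_1; apply Rinv_lt_contravar; lra.
Qed.

Lemma nu_decr k : nu (S k) <= nu k.
Proof. unfold nu; rewrite S_INR; pose proof (pos_INR k); apply Rinv_le_contravar; lra. Qed.

Lemma nu_cvg : is_lim_seq nu 0.
Proof.
  apply (is_lim_seq_inv _ p_infty); [| easy].
  apply is_lim_seq_plus with p_infty 2; [apply is_lim_seq_INR | apply is_lim_seq_const | easy].
Qed.

(* The limit is [psi(1)], minus Euler's constant. *)
Lemma gamma_ratio_0_slope_cvg :
  exists b : R, is_lim_seq (fun k => (gamma_ratio 0 (nu k) - 1) / nu k) b.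
Proof.
  destruct (convex_left_slope_cvg Gamma Gamma_convex 1 Rlt_0_1 nu) as [D HD].
  { intros k; apply nu_bounds. }
  { exact nu_decr. }
  pose proof (Gamma_pos 1 Rlt_0_1).
  exists (- D / (Gamma 1 + 0 * D)).
  apply is_lim_seq_ext with (fun k => - ((Gamma (1 - nu k) - Gamma 1) / nu k)
      / (Gamma 1 + nu k * ((Gamma (1 - nu k) - Gamma 1) / nu k))).
  - intros k; pose proof (nu_bounds k).
    pose proof (Gamma_pos (1 - nu k) ltac:(lra)).
    replace (Gamma 1 + nu k * ((Gamma (1 - nu k) - Gamma 1) / nu k))
      with (Gamma (1 - nu k)) by (field; lra).
    unfold gamma_ratio; simpl INR.
    replace (0 + 1) with 1 by ring; replace (0 - nu k + 1) with (1 - nu k) by ring.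
    field; lra.
  - apply is_lim_seq_div'; [exact (proj1 (is_lim_seq_opp _ D) HD) | | lra].
    apply is_lim_seq_plus'; [apply is_lim_seq_const |].
    now apply is_lim_seq_mult'; [apply nu_cvg |].
Qed.

(* The difference quotient is [x^m (r (exp (- nu ln x) - 1) / nu + (r - 1) / nu)]
   with [r = gamma_ratio m nu -> 1]. *)
Lemma lnD_pow_INR (b : R) (m : nat) (x : R) :
  is_lim_seq (fun k => (gamma_ratio 0 (nu k) - 1) / nu k) b -> 0 < x ->
  lnD_pow (INR m) x = Rpower x (INR m) * (b + harmonic m - ln x).
Proof.
  intros Hb hx.
  assert (ratio_slope := gamma_ratio_slope_cvg nu b m nu_bounds nu_cvg Hb).
  assert (ratio_cvg : is_lim_seq (fun k => gamma_ratio m (nu k)) (1 + 0 * (b + harmonic m))).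
  { apply is_lim_seq_ext with (fun k => 1 + nu k * ((gamma_ratio m (nu k) - 1) / nu k)).
    - intros k; pose proof (nu_bounds k); field; lra.
    - apply is_lim_seq_plus'; [apply is_lim_seq_const |].
      now apply is_lim_seq_mult'; [apply nu_cvg |]. }
  unfold lnD_pow, Lim.
  rewrite (is_lim_seq_unique _ (Rpower x (INR m) * (b + harmonic m - ln x))); [easy |].
  apply is_lim_seq_incr_1.
  apply is_lim_seq_ext with (fun k => Rpower x (INR m)
      * (gamma_ratio m (nu k) * ((exp (- ln x * nu k) - 1) / nu k)
         + (gamma_ratio m (nu k) - 1) / nu k)).
  - intros k; rewrite Rbar_loc_seq_0_succ; pose proof (nu_bounds k).
    unfold frac_deriv_pow; fold (gamma_ratio m (nu k)).
    replace (INR m - nu k) with (INR m + - nu k) by ring.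
    rewrite Rpower_plus; unfold Rpower.
    replace (- nu k * ln x) with (- ln x * nu k) by ring.
    field; lra.
  - replace (b + harmonic m - ln x) with ((1 + 0 * (b + harmonic m)) * - ln x + (b + harmonic m))
      by ring.
    apply is_lim_seq_mult'; [apply is_lim_seq_const |].
    apply is_lim_seq_plus'; [| exact ratio_slope].
    apply is_lim_seq_mult'; [exact ratio_cvg |].
    apply exp_slope_cvg; [intros k; pose proof (nu_bounds k); lra | exact nu_cvg].
Qed.

Section Monomial.

Variable b : R.
Hypothesis b_spec : is_lim_seq (fun k => (gamma_ratio 0 (nu k) - 1) / nu k) b.

Lemma lnD_monomial n x : 0 < x ->
  lnD (monomial n) x = Rpower x (INR n) * (b + harmonic n - ln x).
Proof. intros hx; unfold lnD, monomial; simpl; rewrite (lnD_pow_INR b) by easy; ring. Qed.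

Lemma Derive_lnD_monomial n x : 0 < x ->
  Derive (fun y => lnD (monomial n) y) x
  = Rpower x (INR n - 1) * (INR n * (b + harmonic n - ln x) - 1).
Proof.
  intros hx.
  rewrite (Derive_ext_loc _ (fun y => exp (INR n * ln y) * (b + harmonic n - ln y))).
  - apply is_derive_unique; auto_derive; [lra |].
    unfold Rpower; replace ((INR n - 1) * ln x) with (INR n * ln x + - ln x) by ring.
    rewrite exp_plus, exp_Ropp, exp_ln by lra; field; lra.
  - exists (mkposreal x hx); intros y hy.
    change (Rabs (y - x) < x) in hy; apply Rabs_def2 in hy.
    apply lnD_monomial; lra.
Qed.

End Monomial.

Lemma d_pc_monomial_0 : d_pc (monomial 0) = nil.
Proof. unfold d_pc, monomial; simpl; now destruct (Req_EM_T 0 0). Qed.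

Lemma d_pc_monomial_succ n : d_pc (monomial (S n)) = cons (INR (S n), INR n) nil.
Proof.
  unfold d_pc, monomial; cbn [List.flat_map List.app fst snd].
  destruct (Req_EM_T (INR (S n)) 0) as [h | _]; [now apply not_0_INR in h |].
  cbn [List.app]; rewrite S_INR; do 2 f_equal; ring.
Qed.

Theorem mainTheorem5 (n : nat) (x : R) (hx : 0 < x) :
  lnD (d_pc (monomial n)) x - Derive (fun y => lnD (monomial n) y) x
  = (if Nat.eqb n 0 then 1 else 0) / x.
Proof.
  destruct gamma_ratio_0_slope_cvg as [b Hb].
  rewrite (Derive_lnD_monomial b Hb n x hx).
  destruct n as [| n].
  - rewrite d_pc_monomial_0; simpl.
    unfold Rpower; replace ((0 - 1) * ln x) with (- ln x) by ring.
    rewrite exp_Ropp, exp_ln by easy; field; lra.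
  - rewrite d_pc_monomial_succ; unfold lnD; cbn [List.fold_right fst snd].
    rewrite (lnD_pow_INR b n x Hb hx), S_INR.
    replace (INR n + 1 - 1) with (INR n) by ring; simpl harmonic.
    cbn [Nat.eqb]; pose proof (pos_INR n); field; lra.
Qed.
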